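(* Let $A\in\mathbb{R}^{n\times n}$ be Hurwitz, $B\in\mathbb{R}^{n\times m}$, $C\in\mathbb{R}^{1\times n}$, and $M\in\mathbb{R}^{n\times n}$ symmetric. Let $W,V\in\mathbb{R}^{n\times r}$ with $W^\top V=I_r$. Define $\hat A=W^\top AV$, $\hat B=W^\top B$, $\hat C=CV$, $\hat M=V^\top MV$, and assume $\hat A$ is Hurwitz. Let $P$, $X$, $\hat P$ be the unique solutions of $$AP+PA^\top+BB^\top=0,\qquad AX+X\hat A^\top+B\hat B^\top=0,\qquad \hat A\hat P+\hat P\hat A^\top+\hat B\hat B^\top=0,$$ and let $K\in\mathbb{R}^{n\times r}$, $L\in\mathbb{R}^{r\times r}$ be the unique solutions of $$A^\top K+K\hat A-C^\top\hat C-2MX\hat M=0,\qquad \hat A^\top L+L\hat A+\hat C^\top\hat C+2\hat M\hat P\hat M=0.$$ Consider the cost function $$J_1(W,V)=\mathrm{tr}\big(CPC^\top-2CX\hat C^\top+\hat C\hat P\hat C^\top\big)+\mathrm{tr}\big(PMPM-2X^\top MX\hat M+\hat P\hat M\hat P\hat M\big),$$ regarded as a function of the two matrix variables $W,V\in\mathbb{R}^{n\times r}$ (through $\hat A,\hat B,\hat C,\hat M$). Then the partial-derivative matrices $J_{1,W}=\nabla_W J_1\in\mathbb{R}^{n\times r}$ and $J_{1,V}=\nabla_V J_1\in\mathbb{R}^{n\times r}$, defined entrywise by $(J_{1,W})_{ij}=\partial J_1/\partial W_{ij}$ and $(J_{1,V})_{ij}=\partial J_1/\partial V_{ij}$, are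 given by $$J_{1,W}=2\Big(AV\big(X^\top K+\hat PL\big)+BB^\top\big(K+WL\big)\Big),$$ $$J_{1,V}=2\Big(A^\top W\big(K^\top X+L\hat P\big)+C^\top C\big(V\hat P-X\big)+2MV\big(\hat P\hat M\hat P-X^\top MX\big)\Big).$$
   Context: This concerns a linear time-invariant system with quadratic output (LQO system) $\dot x=Ax+Bu$, $y=Cx+x^\top Mx$, and a reduced-order model of the same form with matrices $(\hat A,\hat B,\hat C,\hat M)$ obtained by Petrov–Galerkin projection. The function $J_1(W,V)$ equals the squared $H_2$ norm of the error system between the full and reduced LQO systems; equivalently $J_1=\mathrm{tr}(B^\top QB+2B^\top Y\hat B+\hat B^\top\hat Q\hat B)$, where $A^\top Q+QA+C^\top C+MPM=0$, $A^\top Y+Y\hat A-C^\top\hat C-MX\hat M=0$, and $\hat A^\top\hat Q+\hat Q\hat A+\hat C^\top\hat C+\hat M\hat P\hat M=0$. A matrix is Hurwitz if all its eigenvalues have negative real part. *)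

From HB Require Import structures.
From mathcomp Require Import all_boot all_order all_algebra.
From mathcomp Require Import all_classical all_reals.
From mathcomp Require Import topology normedtype derive.
From mathcomp Require Import complex.
Set Implicit Arguments. Unset Strict Implicit. Unset Printing Implicit Defensive.
Import Order.TTheory GRing.Theory Num.Theory.
Local Open Scope ring_scope.

Definition hurwitz (R : realType) (n : nat) (A : 'M[R]_n) : Prop :=
  forall z : R[i],
    eigenvalue (map_mx (fun x : R => (x%:C)%C) A) z ->
    complex.Re z < 0.

(* "The" solution X of the Sylvester equation  F X + X G + H = 0
   (an arbitrary solution if one exists, else 0); for Hurwitz F and G the
   solution exists and is unique, so this is the unique solution. *)
Definition sylv (R : realType) (p q : nat)
  (F : 'M[R]_p) (G : 'M[R]_q) (H : 'M[R]_(p, q)) : 'M[R]_(p, q) :=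
  xget 0 [set X | F *m X + X *m G + H = 0].

Definition J1 (R : realType) (n m r : nat)
  (A : 'M[R]_n) (B : 'M[R]_(n, m)) (C : 'M[R]_(1, n)) (M : 'M[R]_n)
  (W V : 'M[R]_(n, r)) : R :=
  let Ah := W^T *m A *m V in
  let Bh := W^T *m B in
  let Ch := C *m V in
  let Mh := V^T *m M *m V in
  let P := sylv A A^T (B *m B^T) in
  let X := sylv A Ah^T (B *m Bh^T) in
  let Ph := sylv Ah Ah^T (Bh *m Bh^T) in
  \tr (C *m P *m C^T - 2%:R *: (C *m X *m Ch^T) + Ch *m Ph *m Ch^T)
  + (\tr (P *m M *m P *m M) - 2%:R * \tr (X^T *m M *m X *m Mh)
     + \tr (Ph *m Mh *m Ph *m Mh)).

(* Along a direction [E], the reduced matrices [Ah, Bh, Ch, Mh] move along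
   differentiable curves.  By Cramer's rule the solutions [X] and [Ph] of the
   Sylvester equations are differentiable, and their derivatives solve the
   linearized equations [A dX + dX Ah^T + N = 0].  Pairing such an equation with
   the adjoint solutions [K] and [L], via
   [tr (dX^T (A^T K + K Ah)) = - tr (N^T K)], eliminates [dX] and [dPh] and
   leaves the first variation
     [2 tr (dAh (X^T K + Ph L) + dBh (B^T K + Bh^T L)
            + dCh^T (Ch Ph - C X) + dMh (Ph Mh Ph - X^T M X))];
   the chain rule through [Ah = W^T A V], ... then gives both gradients. *)

From HB Require Import structures.
From mathcomp Require Import all_boot all_order all_algebra.
From mathcomp Require Import all_classical all_reals.
From mathcomp Require Import topology normedtype derive.
From mathcomp Require Import complex.
From mathcomp Require Import ring lra.
Import Order.TTheory GRing.Theory Num.Theory.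
Import numFieldNormedType.Exports.
Local Open Scope ring_scope.
Set Implicit Arguments. Unset Strict Implicit. Unset Printing Implicit Defensive.

Lemma eigenvalue_unitmx (F : fieldType) n (A : 'M[F]_n) a :
  eigenvalue A a = (A - a%:M \notin unitmx).
Proof. by rewrite /eigenvalue /eigenspace kermx_eq0 row_free_unit. Qed.

Lemma prod_factor_intertwine (F : fieldType) p q (A : 'M[F]_p) (B : 'M[F]_q)
    (Y : 'M[F]_(p, q)) (s : seq F) :
  A *m Y = Y *m B ->
  (\prod_(z <- s) (A - z%:M)) *m Y = Y *m \prod_(z <- s) (B - z%:M).
Proof.
move=> AY; elim: s => [|z s IH]; first by rewrite !big_nil mul1mx mulmx1.
rewrite !big_cons -!mulmxE -mulmxA IH !mulmxA mulmxBl mulmxBr AY.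
by rewrite mul_scalar_mx mul_mx_scalar.
Qed.

(* Cayley-Hamilton: [char_poly A] annihilates [A], and it is carried to an
   invertible product of factors [- B - z] by the intertwining [A Y = Y (- B)]. *)
Lemma sylvester_hom_eq0 (F : closedFieldType) p q (A : 'M[F]_p) (B : 'M[F]_q)
    (Y : 'M[F]_(p, q)) :
  (forall z, eigenvalue A z -> ~~ eigenvalue B (- z)) ->
  A *m Y + Y *m B = 0 -> Y = 0.
Proof.
case: p A Y => [|p] A Y spec AYB; first by apply/matrixP => -[].
have [s chiA] := closed_field_poly_normal (char_poly A).
rewrite (monicP (char_poly_monic A)) scale1r in chiA.
have AY : A *m Y = Y *m - B by apply/eqP; rewrite mulmxN -addr_eq0 AYB.
have chiA0 : \prod_(z <- s) (A - z%:M) = 0.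
  rewrite -(Cayley_Hamilton A) chiA rmorph_prod; apply: eq_bigr => z _.
  by rewrite rmorphB /= horner_mx_X horner_mx_C.
have unit_factor z : z \in s -> - B - z%:M \in unitmx.
  move=> sz; have := spec z; rewrite eigenvalue_root_char chiA root_prod_XsubC sz.
  rewrite eigenvalue_unitmx negbK (_ : B - (- z)%:M = - (- B - z%:M)).
    by rewrite -scaleN1r unitmxZ ?unitrN1 // => /(_ isT).
  by rewrite raddfN /= opprD !opprK.
have unit_prod : \prod_(z <- s) (- B - z%:M) \in unitmx.
  rewrite big_seq; apply: (big_ind (fun C : 'M_q => C \in unitmx)) => //.
    exact: unitmx1.
  by move=> C D uC uD; rewrite -mulmxE unitmx_mul uC uD.
have := prod_factor_intertwine s AY; rewrite chiA0 mul0mx.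
move/(congr1 (mulmx^~ (invmx (\prod_(z <- s) (- B - z%:M))))).
by rewrite mul0mx -mulmxA mulmxV // mulmx1.
Qed.

Lemma hurwitz_trmx (R : realType) n (A : 'M[R]_n) : hurwitz A -> hurwitz A^T.
Proof.
move=> hA z; rewrite -map_trmx eigenvalue_unitmx -unitmx_tr linearB /= trmxK.
by rewrite tr_scalar_mx -eigenvalue_unitmx; apply: hA.
Qed.

Lemma sylvester_hurwitz_eq0 (R : realType) p q (F : 'M[R]_p) (G : 'M[R]_q)
    (Y : 'M[R]_(p, q)) :
  hurwitz F -> hurwitz G -> F *m Y + Y *m G = 0 -> Y = 0.
Proof.
move=> hF hG FYG; pose c := real_complex R.
suff : map_mx c Y = 0 by move/eqP; rewrite map_mx_eq0 => /eqP.
apply: (@sylvester_hom_eq0 _ _ _ (map_mx c F) (map_mx c G)).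
  move=> z /hF Fz; apply/negP => /hG.
  have -> : complex.Re (- z) = - complex.Re z by case: z {Fz}.
  by rewrite oppr_lt0 => /(lt_trans Fz); rewrite ltxx.
by rewrite -!map_mxM -map_mxD FYG map_mx0.
Qed.

Lemma sylvE (R : realType) p q (F : 'M[R]_p) (G : 'M[R]_q) (H Y : 'M[R]_(p, q)) :
  (forall Z, F *m Z + Z *m G = 0 -> Z = 0) ->
  F *m Y + Y *m G + H = 0 -> sylv F G H = Y.
Proof.
move=> injFG FYG; apply: xget_unique => // Z /= FZG; apply/esym/subr0_eq/injFG.
rewrite mulmxBr mulmxBl addrACA -opprD.
by rewrite -(addrK H (F *m Z + _)) FZG -(addrK H (F *m Y + _)) FYG subrr.
Qed.

Lemma sylv_hurwitzE (R : realType) p q (F : 'M[R]_p) (G : 'M[R]_q)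
    (H Y : 'M[R]_(p, q)) :
  hurwitz F -> hurwitz G -> F *m Y + Y *m G + H = 0 -> sylv F G H = Y.
Proof. by move=> hF hG; apply/sylvE => Z; apply: sylvester_hurwitz_eq0. Qed.

Lemma lyapunov_sym (R : realType) p (F : 'M[R]_p) (Y Q : 'M[R]_p) :
  hurwitz F -> Q^T = Q -> F *m Y + Y *m F^T + Q = 0 -> Y^T = Y.
Proof.
move=> hF hQ FY; have hFT := hurwitz_trmx hF.
rewrite -{2}(sylv_hurwitzE hF hFT FY); apply/esym/sylv_hurwitzE => //.
have := congr1 trmx FY; rewrite !linearD /= !trmx_mul trmxK hQ linear0 => <-.
by rewrite (addrC (F *m _)).
Qed.

Section EntrywiseDerivative.
Variable R : realType.

Definition is_mxderive p q (f : R -> 'M[R]_(p, q)) (D : 'M[R]_(p, q)) :=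
  forall i j, is_derive (0 : R) (1 : R) (fun t => f t i j) (D i j).

Lemma is_mxderive_cst p q (A : 'M[R]_(p, q)) : is_mxderive (fun _ => A) 0.
Proof. by move=> i j; rewrite mxE; apply: is_derive_cst. Qed.

Lemma is_mxderiveD p q (f g : R -> 'M[R]_(p, q)) Df Dg :
  is_mxderive f Df -> is_mxderive g Dg ->
  is_mxderive (fun t => f t + g t) (Df + Dg).
Proof.
by move=> hf hg i j; rewrite mxE; under eq_fun do rewrite mxE; exact: is_deriveD.
Qed.

Lemma is_mxderiveN p q (f : R -> 'M[R]_(p, q)) Df :
  is_mxderive f Df -> is_mxderive (fun t => - f t) (- Df).
Proof. by move=> hf i j; rewrite mxE; under eq_fun do rewrite mxE; exact: is_deriveN. Qed.

Lemma is_mxderiveM p q s (f : R -> 'M[R]_(p, q)) (g : R -> 'M[R]_(q, s)) Df Dg :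
  is_mxderive f Df -> is_mxderive g Dg ->
  is_mxderive (fun t => f t *m g t) (Df *m g 0 + f 0 *m Dg).
Proof.
move=> hf hg i j; under eq_fun do rewrite mxE; rewrite -fct_sumE !mxE -big_split /=.
apply: is_derive_sum => k; apply: is_derive_eq; first exact: is_deriveM.
by rewrite /= addrC; congr (_ + _); apply: mulrC.
Qed.

Lemma is_mxderiveMl p q s (A : 'M[R]_(p, q)) (f : R -> 'M[R]_(q, s)) Df :
  is_mxderive f Df -> is_mxderive (fun t => A *m f t) (A *m Df).
Proof.
by move=> hf; have := is_mxderiveM (is_mxderive_cst A) hf; rewrite mul0mx add0r.
Qed.

Lemma is_mxderiveMr p q s (A : 'M[R]_(q, s)) (f : R -> 'M[R]_(p, q)) Df :
  is_mxderive f Df -> is_mxderive (fun t => f t *m A) (Df *m A).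
Proof.
by move=> hf; have := is_mxderiveM hf (is_mxderive_cst A); rewrite mulmx0 addr0.
Qed.

Lemma is_mxderive_tr p q (f : R -> 'M[R]_(p, q)) Df :
  is_mxderive f Df -> is_mxderive (fun t => (f t)^T) Df^T.
Proof. by move=> hf i j; rewrite mxE; under eq_fun do rewrite mxE; exact: hf. Qed.

Lemma is_derive_mxtrace p (f : R -> 'M[R]_p) Df :
  is_mxderive f Df -> is_derive (0 : R) (1 : R) (fun t => \tr (f t)) (\tr Df).
Proof. by move=> hf; rewrite /mxtrace -fct_sumE; apply: is_derive_sum => k; exact: hf. Qed.

End EntrywiseDerivative.

Section Derivability.
Variable R : realType.

Definition mx_derivable p q (f : R -> 'M[R]_(p, q)) :=
  forall i j, derivable (fun t => f t i j) (0 : R) (1 : R).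

Lemma is_mxderive_derivable p q (f : R -> 'M[R]_(p, q)) D :
  is_mxderive f D -> mx_derivable f.
Proof. by move=> hf i j; case: (hf i j). Qed.

Lemma mx_derivableP p q (f : R -> 'M[R]_(p, q)) :
  mx_derivable f -> is_mxderive f (\matrix_(i, j) 'D_1 (fun t => f t i j) 0).
Proof. by move=> hf i j; rewrite mxE; apply: derivableP. Qed.

Lemma mx_derivableM p q s (f : R -> 'M[R]_(p, q)) (g : R -> 'M[R]_(q, s)) :
  mx_derivable f -> mx_derivable g -> mx_derivable (fun t => f t *m g t).
Proof.
move=> /mx_derivableP hf /mx_derivableP hg.
exact: is_mxderive_derivable (is_mxderiveM hf hg).
Qed.

Lemma derivable_big_sum (I : Type) (s : seq I) (P : pred I) (h : I -> R -> R) :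
  (forall k, derivable (h k) (0 : R) (1 : R)) ->
  derivable (fun t => \sum_(k <- s | P k) h k t) (0 : R) (1 : R).
Proof.
move=> hh; rewrite -fct_sumE.
apply: (big_ind (fun f : R -> R => derivable f (0 : R) (1 : R))) => [|f g|k _].
- exact: derivable_cst.
- exact: derivableD.
- exact: hh.
Qed.

Lemma derivable_big_prod (I : Type) (s : seq I) (P : pred I) (h : I -> R -> R) :
  (forall k, derivable (h k) (0 : R) (1 : R)) ->
  derivable (fun t => \prod_(k <- s | P k) h k t) (0 : R) (1 : R).
Proof.
move=> hh; rewrite -fct_prodE.
apply: (big_ind (fun f : R -> R => derivable f (0 : R) (1 : R))) => [|f g|k _].
- exact: derivable_cst.
- exact: derivableM.
- exact: hh.
Qed.

Lemma derivable_det n (L : R -> 'M[R]_n) :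
  mx_derivable L -> derivable (fun t => \det (L t)) (0 : R) (1 : R).
Proof.
move=> hL; apply: derivable_big_sum => s.
by apply: derivableM; [exact: derivable_cst|apply: derivable_big_prod => i; apply: hL].
Qed.

Lemma mx_derivable_adj n (L : R -> 'M[R]_n) :
  mx_derivable L -> mx_derivable (fun t => \adj (L t)).
Proof.
move=> hL i j; under eq_fun do rewrite mxE /cofactor.
apply: derivableM; first exact: derivable_cst.
by apply: derivable_det => a b; under eq_fun do rewrite !mxE; apply: hL.
Qed.

Lemma mx_derivable_mxvec p q (f : R -> 'M[R]_(p, q)) :
  mx_derivable f -> mx_derivable (fun t => mxvec (f t)).
Proof.
move=> hf i l; rewrite (ord1 i); case/mxvec_indexP: l => a b.
by under eq_fun do rewrite mxvecE; apply: hf.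
Qed.

Lemma mx_derivable_vec_mx p q (f : R -> 'rV[R]_(p * q)) :
  mx_derivable f -> mx_derivable (fun t => vec_mx (f t)).
Proof. by move=> hf i j; under eq_fun do rewrite mxE; apply: hf. Qed.

Lemma near_unitmx n (L : R -> 'M[R]_n) :
  mx_derivable L -> L 0 \in unitmx -> \forall t \near 0, L t \in unitmx.
Proof.
move=> /derivable_det/derivable1_diffP/differentiable_continuous detL.
rewrite unitmxE unitfE => /(cvgr_neq0 _ detL).
by apply: filterS => t; rewrite unitmxE unitfE.
Qed.

Lemma mx_derivable_invmx n (L : R -> 'M[R]_n) :
  mx_derivable L -> L 0 \in unitmx -> mx_derivable (fun t => invmx (L t)).
Proof.
move=> hL L0 i j.
apply: (@near_eq_derivable _ _ _ (fun t => (\det (L t))^-1 * \adj (L t) i j)).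
  near=> t; rewrite /invmx (_ : L t \in unitmx) ?mxE //.
  by near: t; apply: near_unitmx.
apply: derivableM; last exact: mx_derivable_adj.
by apply: derivableV; [rewrite -unitfE -unitmxE|exact: derivable_det].
Unshelve. all: by end_near.
Qed.

End Derivability.

Section SylvesterDerivative.
Variable R : realType.

Definition sylvester_mx p q (F : 'M[R]_p) (G : 'M[R]_q) : 'M[R]_(p * q) :=
  lin_mulmx F + lin_mulmxr G.

Lemma mul_vec_sylvester p q (F : 'M[R]_p) (G : 'M[R]_q) (Y : 'M[R]_(p, q)) :
  mxvec Y *m sylvester_mx F G = mxvec (F *m Y + Y *m G).
Proof. by rewrite mulmxDr !mul_vec_lin linearD. Qed.

Lemma sylvester_mx_unitP p q (F : 'M[R]_p) (G : 'M[R]_q) :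
  reflect (forall Z, F *m Z + Z *m G = 0 -> Z = 0) (sylvester_mx F G \in unitmx).
Proof.
apply: (iffP idP) => [unitL Z /(congr1 mxvec)|injFG].
  rewrite -mul_vec_sylvester linear0 => /(congr1 (mulmx^~ (invmx (sylvester_mx F G)))).
  by rewrite -mulmxA mulmxV // mulmx1 mul0mx => /eqP; rewrite mxvec_eq0 => /eqP.
rewrite unitmxE unitfE; apply/negP => /det0P [v nz_v vL].
have : vec_mx v = 0.
  apply/injFG/(can_inj mxvecK).
  by rewrite -mul_vec_sylvester vec_mxK vL linear0.
by move/eqP; rewrite vec_mx_eq0 (negbTE nz_v).
Qed.

Lemma sylv_invmx p q (F : 'M[R]_p) (G : 'M[R]_q) (H : 'M[R]_(p, q)) :
  sylvester_mx F G \in unitmx ->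
  let S := vec_mx (- mxvec H *m invmx (sylvester_mx F G)) in
  F *m S + S *m G + H = 0 /\ sylv F G H = S.
Proof.
move=> /[dup] unitL /sylvester_mx_unitP injFG S.
suff solS : F *m S + S *m G + H = 0 by split; last exact: sylvE.
apply: (can_inj mxvecK); rewrite linearD /= -mul_vec_sylvester vec_mxK.
by rewrite -mulmxA mulVmx // mulmx1 addNr linear0.
Qed.

Lemma mx_derivable_sylvester_mx p q (F : R -> 'M[R]_p) (G : R -> 'M[R]_q) :
  mx_derivable F -> mx_derivable G -> mx_derivable (fun t => sylvester_mx (F t) (G t)).
Proof.
move=> hF hG k l.
have entry (L : 'M[R]_(p * q)) : L k l = (mxvec (vec_mx (delta_mx 0 k)) *m L) 0 l.
  by rewrite vec_mxK -rowE mxE.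
under eq_fun do rewrite entry mul_vec_sylvester.
apply/mx_derivable_mxvec/is_mxderive_derivable/is_mxderiveD.
  exact: is_mxderiveMr (mx_derivableP hF).
exact: is_mxderiveMl (mx_derivableP hG).
Qed.

Lemma is_mxderive_near_eq0 p q (f : R -> 'M[R]_(p, q)) D :
  (\forall t \near 0, f t = 0) -> is_mxderive f D -> D = 0.
Proof.
move=> f0 hf; apply/matrixP => i j; rewrite mxE.
have : is_derive (0 : R) (1 : R) (cst 0) (D i j).
  by apply: near_eq_is_derive (hf i j); apply: filterS f0 => t ->; rewrite mxE.
by case=> _ <-; rewrite derive_cst.
Qed.

(* The solution is given near [t = 0] by Cramer's rule, hence is differentiable;
   its derivative is then read off by differentiating the Sylvester equation. *)
Lemma is_mxderive_sylv p q (F : R -> 'M[R]_p) (G : R -> 'M[R]_q)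
    (H : R -> 'M[R]_(p, q)) dF dG dH (Y : 'M[R]_(p, q)) :
  is_mxderive F dF -> is_mxderive G dG -> is_mxderive H dH ->
  (forall Z, F 0 *m Z + Z *m G 0 = 0 -> Z = 0) ->
  F 0 *m Y + Y *m G 0 + H 0 = 0 ->
  exists2 dY, is_mxderive (fun t => sylv (F t) (G t) (H t)) dY &
    F 0 *m dY + dY *m G 0 + (dF *m Y + Y *m dG + dH) = 0.
Proof.
move=> hF hG hH injFG0 solY.
pose L t := sylvester_mx (F t) (G t).
pose S t := vec_mx (- mxvec (H t) *m invmx (L t)).
have dL : mx_derivable L.
  exact: mx_derivable_sylvester_mx (is_mxderive_derivable hF) (is_mxderive_derivable hG).
have unitL0 : L 0 \in unitmx by apply/sylvester_mx_unitP.
have unitL := near_unitmx dL unitL0.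
have dS : mx_derivable S.
  apply/mx_derivable_vec_mx/mx_derivableM; last exact: mx_derivable_invmx.
  have vecH := mx_derivable_mxvec (is_mxderive_derivable hH).
  exact: is_mxderive_derivable (is_mxderiveN (mx_derivableP vecH)).
have S0 : S 0 = Y by rewrite /S /L -(sylv_invmx (H 0) unitL0).2; apply: sylvE.
exists (\matrix_(i, j) 'D_1 (fun t => S t i j) 0).
  move=> i j; apply: near_eq_is_derive (mx_derivableP dS i j).
  by apply: filterS unitL => t /(sylv_invmx (H t)) [_ ->].
have := is_mxderive_near_eq0 _ (is_mxderiveD (is_mxderiveD (is_mxderiveM hF (mx_derivableP dS))
  (is_mxderiveM (mx_derivableP dS) hG)) hH); rewrite S0.
have solS : \forall t \near 0, F t *m S t + S t *m G t + H t = 0.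
  by apply: filterS unitL => t /(sylv_invmx (H t)) [].
move=> /(_ solS) /matrixP E; apply/matrixP => i j; move: (E i j); rewrite !mxE.
lra.
Qed.

End SylvesterDerivative.

Lemma mxtrace_mul_tr (R : comNzRingType) p q (A : 'M[R]_(p, q)) (B : 'M[R]_(q, p)) :
  \tr (A *m B) = \tr (B^T *m A^T).
Proof. by rewrite -trmx_mul mxtrace_tr. Qed.

Lemma mxtrace_sylvester_adjoint (R : comNzRingType) p q (F : 'M[R]_p)
    (G : 'M[R]_q) (D N K : 'M[R]_(p, q)) :
  F *m D + D *m G + N = 0 ->
  \tr (D^T *m (F^T *m K + K *m G^T)) = - \tr (N^T *m K).
Proof.
move=> FDG; have FD : F *m D = - (D *m G + N) by apply/eqP; rewrite -addr_eq0 addrA FDG.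
rewrite mulmxDr mxtraceD mulmxA -trmx_mul FD linearN /= linearD /= trmx_mul.
rewrite mulNmx mulmxDl raddfN /= mxtraceD.
rewrite [\tr (D^T *m (K *m G^T))]mxtrace_mulC -!mulmxA.
by rewrite [\tr (K *m _)]mxtrace_mulC !mulmxA; ring.
Qed.

Section FirstVariation.
Variables (R : realType) (n m r : nat).
Variables (A : 'M[R]_n) (B : 'M[R]_(n, m)) (C : 'M[R]_(1, n)) (M : 'M[R]_n).
Variables (Ah : 'M[R]_r) (Bh : 'M[R]_(r, m)) (Ch : 'M[R]_(1, r)) (Mh : 'M[R]_r).
Variables (X K : 'M[R]_(n, r)) (Ph L : 'M[R]_r).
Hypotheses (symM : M^T = M) (symMh : Mh^T = Mh) (symPh : Ph^T = Ph) (symL : L^T = L).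
Hypothesis eqK : A^T *m K + K *m Ah - C^T *m Ch - 2%:R *: (M *m X *m Mh) = 0.
Hypothesis eqL : Ah^T *m L + L *m Ah + Ch^T *m Ch + 2%:R *: (Mh *m Ph *m Mh) = 0.

Lemma first_variation_X (dX : 'M[R]_(n, r)) (dAh : 'M[R]_r) (dBh : 'M[R]_(r, m)) :
  A *m dX + dX *m Ah^T + (X *m dAh^T + B *m dBh^T) = 0 ->
  \tr (C *m dX *m Ch^T) + (\tr (dX^T *m M *m X *m Mh) + \tr (X^T *m M *m dX *m Mh))
  = - (\tr (dAh *m X^T *m K) + \tr (dBh *m B^T *m K)).
Proof.
move=> eqdX; have := mxtrace_sylvester_adjoint K eqdX.
have -> : A^T *m K + K *m Ah^T^T = C^T *m Ch + 2%:R *: (M *m X *m Mh).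
  by rewrite trmxK; apply/eqP; rewrite -subr_eq0 opprD addrA eqK.
rewrite mulmxDr mxtraceD -scalemxAr mxtraceZ linearD /= !trmx_mul !trmxK.
rewrite mulmxDl mxtraceD => adj.
have trC : \tr (C *m dX *m Ch^T) = \tr (dX^T *m C^T *m Ch).
  by rewrite mxtrace_mul_tr trmxK trmx_mul mxtrace_mulC.
have trM : \tr (X^T *m M *m dX *m Mh) = \tr (dX^T *m M *m X *m Mh).
  by rewrite mxtrace_mul_tr !trmx_mul trmxK symM symMh mxtrace_mulC !mulmxA.
rewrite trC trM; rewrite -!mulmxA in adj *; lra.
Qed.

Lemma first_variation_Ph (dPh dAh : 'M[R]_r) (dBh : 'M[R]_(r, m)) :
  Ah *m dPh + dPh *m Ah^T + (dAh *m Ph + Ph *m dAh^T + (dBh *m Bh^T + Bh *m dBh^T)) = 0 ->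
  \tr (Ch *m dPh *m Ch^T) + (\tr (dPh *m Mh *m Ph *m Mh) + \tr (Ph *m Mh *m dPh *m Mh))
  = 2%:R * (\tr (dAh *m Ph *m L) + \tr (dBh *m Bh^T *m L)).
Proof.
move=> eqdPh; have := mxtrace_sylvester_adjoint L eqdPh.
have -> : Ah^T *m L + L *m Ah^T^T = - (Ch^T *m Ch + 2%:R *: (Mh *m Ph *m Mh)).
  by rewrite trmxK; apply/eqP; rewrite -addr_eq0 addrA eqL.
rewrite mulmxN raddfN /= mulmxDr mxtraceD -scalemxAr mxtraceZ.
rewrite !linearD /= !trmx_mul !trmxK symPh !mulmxDl !mxtraceD => adj.
have trCh : \tr (Ch *m dPh *m Ch^T) = \tr (dPh^T *m Ch^T *m Ch).
  by rewrite mxtrace_mul_tr trmxK trmx_mul mxtrace_mulC.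
have trMh : \tr (dPh *m Mh *m Ph *m Mh) = \tr (dPh^T *m Mh *m Ph *m Mh).
  by rewrite mxtrace_mul_tr !trmx_mul symMh symPh !mulmxA mxtrace_mulC !mulmxA.
have trMhC : \tr (Ph *m Mh *m dPh *m Mh) = \tr (dPh *m Mh *m Ph *m Mh).
  by rewrite -mulmxA mxtrace_mulC !mulmxA.
have trA : \tr (Ph *m dAh^T *m L) = \tr (dAh *m Ph *m L).
  by rewrite mxtrace_mul_tr !trmx_mul trmxK symPh symL mxtrace_mulC.
have trB : \tr (Bh *m dBh^T *m L) = \tr (dBh *m Bh^T *m L).
  by rewrite mxtrace_mul_tr !trmx_mul !trmxK symL mxtrace_mulC.
rewrite trCh trMhC trMh; rewrite -!mulmxA in adj trA trB *; lra.
Qed.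

Lemma first_variation_Ch (dCh : 'M[R]_(1, r)) :
  - 2%:R * \tr (C *m X *m dCh^T) + (\tr (dCh *m Ph *m Ch^T) + \tr (Ch *m Ph *m dCh^T))
  = 2%:R * \tr (dCh^T *m (Ch *m Ph - C *m X)).
Proof.
have trC : \tr (dCh *m Ph *m Ch^T) = \tr (Ch *m Ph *m dCh^T).
  by rewrite mxtrace_mul_tr trmxK trmx_mul symPh mulmxA.
rewrite trC mulmxBr mxtraceD raddfN /= [\tr (dCh^T *m _)]mxtrace_mulC.
rewrite [\tr (dCh^T *m _)]mxtrace_mulC; lra.
Qed.

Lemma first_variation_Mh (dMh : 'M[R]_r) :
  - 2%:R * \tr (X^T *m M *m X *m dMh)
    + (\tr (Ph *m dMh *m Ph *m Mh) + \tr (Ph *m Mh *m Ph *m dMh))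
  = 2%:R * \tr (dMh *m (Ph *m Mh *m Ph - X^T *m M *m X)).
Proof.
have trX : \tr (X^T *m M *m X *m dMh) = \tr (dMh *m (X^T *m M *m X)).
  exact: mxtrace_mulC.
have trPh : \tr (Ph *m Mh *m Ph *m dMh) = \tr (dMh *m (Ph *m Mh *m Ph)).
  exact: mxtrace_mulC.
have trPh' : \tr (Ph *m dMh *m Ph *m Mh) = \tr (dMh *m (Ph *m Mh *m Ph)).
  by rewrite -!mulmxA mxtrace_mulC -!mulmxA.
rewrite trX trPh trPh' mulmxBr mxtraceD raddfN /=; lra.
Qed.

End FirstVariation.

Definition lqo_cost (R : realType) (n m r : nat)
    (A : 'M[R]_n) (B : 'M[R]_(n, m)) (C : 'M[R]_(1, n)) (M : 'M[R]_n)
    (Ah : 'M[R]_r) (Bh : 'M[R]_(r, m)) (Ch : 'M[R]_(1, r)) (Mh : 'M[R]_r) : R :=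
  let P := sylv A A^T (B *m B^T) in
  let X := sylv A Ah^T (B *m Bh^T) in
  let Ph := sylv Ah Ah^T (Bh *m Bh^T) in
  \tr (C *m P *m C^T) - 2%:R * \tr (C *m X *m Ch^T) + \tr (Ch *m Ph *m Ch^T)
  + (\tr (P *m M *m P *m M) - 2%:R * \tr (X^T *m M *m X *m Mh)
     + \tr (Ph *m Mh *m Ph *m Mh)).

Lemma J1E (R : realType) (n m r : nat)
    (A : 'M[R]_n) (B : 'M[R]_(n, m)) (C : 'M[R]_(1, n)) (M : 'M[R]_n)
    (W V : 'M[R]_(n, r)) :
  J1 A B C M W V
  = lqo_cost A B C M (W^T *m A *m V) (W^T *m B) (C *m V) (V^T *m M *m V).
Proof. by rewrite /J1 /lqo_cost !mxtraceD raddfN /= mxtraceZ. Qed.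

Section CostDerivative.
Variables (R : realType) (n m r : nat).
Variables (A : 'M[R]_n) (B : 'M[R]_(n, m)) (C : 'M[R]_(1, n)) (M : 'M[R]_n).
Variables (Ah : R -> 'M[R]_r) (Bh : R -> 'M[R]_(r, m)).
Variables (Ch : R -> 'M[R]_(1, r)) (Mh : R -> 'M[R]_r).
Variables (dAh : 'M[R]_r) (dBh : 'M[R]_(r, m)) (dCh : 'M[R]_(1, r)) (dMh : 'M[R]_r).
Variables (X K : 'M[R]_(n, r)) (Ph L : 'M[R]_r).
Hypotheses (hAh : is_mxderive Ah dAh) (hBh : is_mxderive Bh dBh).
Hypotheses (hCh : is_mxderive Ch dCh) (hMh : is_mxderive Mh dMh).
Hypotheses (hurA : hurwitz A) (hurAh : hurwitz (Ah 0)).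
Hypotheses (symM : M^T = M) (symMh : (Mh 0)^T = Mh 0).
Hypotheses (symPh : Ph^T = Ph) (symL : L^T = L).
Hypothesis eqX : A *m X + X *m (Ah 0)^T + B *m (Bh 0)^T = 0.
Hypothesis eqPh : Ah 0 *m Ph + Ph *m (Ah 0)^T + Bh 0 *m (Bh 0)^T = 0.
Hypothesis eqK : A^T *m K + K *m Ah 0 - C^T *m Ch 0 - 2%:R *: (M *m X *m Mh 0) = 0.
Hypothesis eqL :
  (Ah 0)^T *m L + L *m Ah 0 + (Ch 0)^T *m Ch 0 + 2%:R *: (Mh 0 *m Ph *m Mh 0) = 0.

Let Xt t := sylv A (Ah t)^T (B *m (Bh t)^T).
Let Pht t := sylv (Ah t) (Ah t)^T (Bh t *m (Bh t)^T).

Let Xt0 : Xt 0 = X.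
Proof. exact: sylv_hurwitzE hurA (hurwitz_trmx hurAh) eqX. Qed.

Let Pht0 : Pht 0 = Ph.
Proof. exact: sylv_hurwitzE hurAh (hurwitz_trmx hurAh) eqPh. Qed.

Lemma exists_derive_X : exists2 dX, is_mxderive Xt dX &
  A *m dX + dX *m (Ah 0)^T + (X *m dAh^T + B *m dBh^T) = 0.
Proof.
have [|dX hdX] := is_mxderive_sylv (is_mxderive_cst A) (is_mxderive_tr hAh)
  (is_mxderiveMl B (is_mxderive_tr hBh)) _ eqX.
  by move=> Z; apply: sylvester_hurwitz_eq0 hurA (hurwitz_trmx hurAh).
by rewrite mul0mx add0r => eqdX; exists dX.
Qed.

Lemma exists_derive_Ph : exists2 dPh, is_mxderive Pht dPh &
  Ah 0 *m dPh + dPh *m (Ah 0)^T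
    + (dAh *m Ph + Ph *m dAh^T + (dBh *m (Bh 0)^T + Bh 0 *m dBh^T)) = 0.
Proof.
rewrite -Pht0; apply: is_mxderive_sylv hAh (is_mxderive_tr hAh)
  (is_mxderiveM hBh (is_mxderive_tr hBh)) _ _; last by rewrite Pht0.
by move=> Z; apply: sylvester_hurwitz_eq0 hurAh (hurwitz_trmx hurAh).
Qed.

Lemma is_derive_tr_CXCh dX : is_mxderive Xt dX ->
  is_derive (0 : R) (1 : R) (fun t => \tr (C *m Xt t *m (Ch t)^T))
    (\tr (C *m dX *m (Ch 0)^T) + \tr (C *m X *m dCh^T)).
Proof.
move=> hdX; apply: is_derive_eq.
  exact: is_derive_mxtrace (is_mxderiveM (is_mxderiveMl C hdX) (is_mxderive_tr hCh)).
by rewrite /= Xt0 mxtraceD.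
Qed.

Lemma is_derive_tr_ChPhCh dPh : is_mxderive Pht dPh ->
  is_derive (0 : R) (1 : R) (fun t => \tr (Ch t *m Pht t *m (Ch t)^T))
    (\tr (dCh *m Ph *m (Ch 0)^T) + \tr (Ch 0 *m dPh *m (Ch 0)^T)
     + \tr (Ch 0 *m Ph *m dCh^T)).
Proof.
move=> hdPh; apply: is_derive_eq.
  exact: is_derive_mxtrace (is_mxderiveM (is_mxderiveM hCh hdPh) (is_mxderive_tr hCh)).
by rewrite /= Pht0 mulmxDl !mxtraceD.
Qed.

Lemma is_derive_tr_XMXMh dX : is_mxderive Xt dX ->
  is_derive (0 : R) (1 : R) (fun t => \tr ((Xt t)^T *m M *m Xt t *m Mh t))
    (\tr (dX^T *m M *m X *m Mh 0) + \tr (X^T *m M *m dX *m Mh 0)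
     + \tr (X^T *m M *m X *m dMh)).
Proof.
move=> hdX; apply: is_derive_eq.
  exact: is_derive_mxtrace (is_mxderiveM (is_mxderiveM
    (is_mxderiveMr M (is_mxderive_tr hdX)) hdX) hMh).
by rewrite /= Xt0 mulmxDl !mxtraceD.
Qed.

Lemma is_derive_tr_PhMhPhMh dPh : is_mxderive Pht dPh ->
  is_derive (0 : R) (1 : R) (fun t => \tr (Pht t *m Mh t *m Pht t *m Mh t))
    (\tr (dPh *m Mh 0 *m Ph *m Mh 0) + \tr (Ph *m dMh *m Ph *m Mh 0)
     + \tr (Ph *m Mh 0 *m dPh *m Mh 0) + \tr (Ph *m Mh 0 *m Ph *m dMh)).
Proof.
move=> hdPh; apply: is_derive_eq.
  exact: is_derive_mxtrace (is_mxderiveM (is_mxderiveM (is_mxderiveM hdPh hMh) hdPh) hMh).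
by rewrite /= Pht0 !mulmxDl !mxtraceD.
Qed.

Lemma is_derive_lqo_cost :
  is_derive (0 : R) (1 : R)
    (fun t => lqo_cost A B C M (Ah t) (Bh t) (Ch t) (Mh t))
    (2%:R * (\tr (dAh *m (X^T *m K + Ph *m L)) + \tr (dBh *m (B^T *m K + (Bh 0)^T *m L))
             + \tr (dCh^T *m (Ch 0 *m Ph - C *m X))
             + \tr (dMh *m (Ph *m Mh 0 *m Ph - X^T *m M *m X)))).
Proof.
have [dX hdX eqdX] := exists_derive_X.
have [dPh hdPh eqdPh] := exists_derive_Ph.
pose P := sylv A A^T (B *m B^T).
have dJ := is_deriveD
  (is_deriveD (is_deriveB (is_derive_cst (\tr (C *m P *m C^T)) (0 : R) (1 : R))
    (is_deriveZ 2%:R (is_derive_tr_CXCh hdX))) (is_derive_tr_ChPhCh hdPh))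
  (is_deriveD (is_deriveB (is_derive_cst (\tr (P *m M *m P *m M)) (0 : R) (1 : R))
    (is_deriveZ 2%:R (is_derive_tr_XMXMh hdX))) (is_derive_tr_PhMhPhMh hdPh)).
apply: is_derive_eq dJ _.
have vX := first_variation_X symM symMh eqK eqdX.
have vPh := first_variation_Ph symMh symPh symL eqL eqdPh.
have vCh := first_variation_Ch C (Ch 0) X symPh dCh.
have vMh := first_variation_Mh M (Mh 0) X Ph dMh.
have scale_mul (x y : R) : x *: y = x * y by [].
rewrite !scale_mul (mulmxDr dAh) (mulmxDr dBh) !mxtraceD !mulmxA; lra.
Qed.

End CostDerivative.

Lemma mxtrace_trmx_delta (R : pzSemiRingType) p q (i : 'I_p) (j : 'I_q)
    (Y : 'M[R]_(p, q)) :
  \tr ((delta_mx i j)^T *m Y) = Y i j.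
Proof.
rewrite trmx_delta /mxtrace (bigD1 j) //= big1 => [|k kj].
  rewrite addr0 mxE (bigD1 i) //= big1 => [|l li]; first by rewrite mxE !eqxx mul1r addr0.
  by rewrite mxE (negbTE li) andbF mul0r.
by rewrite mxE big1 // => l _; rewrite mxE (negbTE kj) mul0r.
Qed.

Lemma is_mxderive_line (R : realType) p q (W E : 'M[R]_(p, q)) :
  is_mxderive (fun t => W + t *: E) E.
Proof.
move=> i j; under eq_fun do rewrite !mxE mulrC.
apply: is_derive_eq (is_deriveD (is_derive_cst (W i j) (0 : R) (1 : R))
  (is_deriveZ (E i j) (is_derive_id (0 : R) (1 : R)))) _.
by rewrite add0r; apply: mulr1.
Qed.

Section Gradients.
Variables (R : realType) (n m r : nat).
Variables (A : 'M[R]_n) (B : 'M[R]_(n, m)) (C : 'M[R]_(1, n)) (M : 'M[R]_n).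
Variables (W V X K : 'M[R]_(n, r)) (Ph L : 'M[R]_r).
Hypotheses (hurA : hurwitz A) (hurAh : hurwitz (W^T *m A *m V)).
Hypotheses (symM : M^T = M) (symPh : Ph^T = Ph) (symL : L^T = L).
Hypothesis eqX : A *m X + X *m (W^T *m A *m V)^T + B *m (W^T *m B)^T = 0.
Hypothesis eqPh : (W^T *m A *m V) *m Ph + Ph *m (W^T *m A *m V)^T
  + (W^T *m B) *m (W^T *m B)^T = 0.
Hypothesis eqK : A^T *m K + K *m (W^T *m A *m V) - C^T *m (C *m V)
  - 2%:R *: (M *m X *m (V^T *m M *m V)) = 0.
Hypothesis eqL : (W^T *m A *m V)^T *m L + L *m (W^T *m A *m V) + (C *m V)^T *m (C *m V)
  + 2%:R *: ((V^T *m M *m V) *m Ph *m (V^T *m M *m V)) = 0.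

Let symMh : (V^T *m M *m V)^T = V^T *m M *m V.
Proof. by rewrite !trmx_mul trmxK symM mulmxA. Qed.

Lemma is_derive_J1_W (i : 'I_n) (j : 'I_r) :
  is_derive (0 : R) (1 : R) (fun t => J1 A B C M (W + t *: delta_mx i j) V)
    ((2%:R *: (A *m V *m (X^T *m K + Ph *m L) + B *m B^T *m (K + W *m L))) i j).
Proof.
set E := delta_mx i j; pose Wt t := W + t *: E.
have Wt0 : Wt 0 = W by rewrite /Wt scale0r addr0.
have dWt : is_mxderive (fun t => (Wt t)^T) E^T := is_mxderive_tr (is_mxderive_line W E).
have dAh : is_mxderive (fun t => (Wt t)^T *m A *m V) (E^T *m A *m V).
  by do 2 apply: is_mxderiveMr.
have dBh : is_mxderive (fun t => (Wt t)^T *m B) (E^T *m B) by apply: is_mxderiveMr.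
under eq_fun do rewrite J1E.
apply: is_derive_eq.
  apply: (is_derive_lqo_cost (X := X) (K := K) (Ph := Ph) (L := L) dAh dBh
    (is_mxderive_cst (C *m V)) (is_mxderive_cst (V^T *m M *m V))); by rewrite /= ?Wt0.
rewrite /= Wt0 -(mxtrace_trmx_delta i j) -/E trmx0 !mul0mx mxtrace0 !addr0.
rewrite -scalemxAr mxtraceZ trmx_mul trmxK !mulmxDr !mxtraceD !mulmxA; lra.
Qed.

Lemma is_derive_J1_V (i : 'I_n) (j : 'I_r) :
  is_derive (0 : R) (1 : R) (fun t => J1 A B C M W (V + t *: delta_mx i j))
    ((2%:R *: (A^T *m W *m (K^T *m X + L *m Ph) + C^T *m C *m (V *m Ph - X)
      + 2%:R *: (M *m V *m (Ph *m (V^T *m M *m V) *m Ph - X^T *m M *m X)))) i j).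
Proof.
set E := delta_mx i j; pose Vt t := V + t *: E.
have Vt0 : Vt 0 = V by rewrite /Vt scale0r addr0.
have dVt : is_mxderive Vt E := is_mxderive_line V E.
have dMh := is_mxderiveM (is_mxderiveMr M (is_mxderive_tr dVt)) dVt.
rewrite /= Vt0 in dMh.
under eq_fun do rewrite J1E.
apply: is_derive_eq.
  apply: (is_derive_lqo_cost (X := X) (K := K) (Ph := Ph) (L := L)
    (is_mxderiveMl (W^T *m A) dVt) (is_mxderive_cst (W^T *m B)) (is_mxderiveMl C dVt) dMh);
    by rewrite /= ?Vt0.
pose S := Ph *m (V^T *m M *m V) *m Ph - X^T *m M *m X.
have symS : S^T = S by rewrite /S linearB /= !trmx_mul !trmxK symPh symM !mulmxA.
rewrite /= Vt0 -(mxtrace_trmx_delta i j) -/E -/S mul0mx mxtrace0 addr0.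
have trA : \tr (W^T *m A *m E *m (X^T *m K + Ph *m L))
    = \tr (E^T *m (A^T *m W *m (K^T *m X + L *m Ph))).
  by rewrite mxtrace_mul_tr linearD /= !trmx_mul !trmxK symL symPh mxtrace_mulC !mulmxA.
have trC : (C *m E)^T *m (C *m V *m Ph - C *m X) = E^T *m (C^T *m C *m (V *m Ph - X)).
  by rewrite trmx_mul -!mulmxA -mulmxBr.
have trM : \tr (V^T *m M *m E *m S) = \tr (E^T *m (M *m V *m S)).
  by rewrite mxtrace_mul_tr !trmx_mul !trmxK symS symM mxtrace_mulC !mulmxA.
rewrite trA trC mulmxDl mxtraceD trM -!scalemxAr !mxtraceZ !mulmxDr !mxtraceD.
by rewrite -scalemxAr mxtraceZ !mulmxDr !mxtraceD !mulmxA; lra.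
Qed.

End Gradients.

Theorem theorem1 (R : realType) (n m r : nat)
  (A : 'M[R]_n) (B : 'M[R]_(n, m)) (C : 'M[R]_(1, n)) (M : 'M[R]_n)
  (W V : 'M[R]_(n, r))
  (P : 'M[R]_n) (X : 'M[R]_(n, r)) (Ph : 'M[R]_r)
  (K : 'M[R]_(n, r)) (L : 'M[R]_r) :
  hurwitz A -> M^T = M -> W^T *m V = 1%:M ->
  hurwitz (W^T *m A *m V) ->
  A *m P + P *m A^T + B *m B^T = 0 ->
  A *m X + X *m (W^T *m A *m V)^T + B *m (W^T *m B)^T = 0 ->
  (W^T *m A *m V) *m Ph + Ph *m (W^T *m A *m V)^T
    + (W^T *m B) *m (W^T *m B)^T = 0 ->
  A^T *m K + K *m (W^T *m A *m V) - C^T *m (C *m V)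
    - 2%:R *: (M *m X *m (V^T *m M *m V)) = 0 ->
  (W^T *m A *m V)^T *m L + L *m (W^T *m A *m V) + (C *m V)^T *m (C *m V)
    + 2%:R *: ((V^T *m M *m V) *m Ph *m (V^T *m M *m V)) = 0 ->
  (forall (i : 'I_n) (j : 'I_r),
     is_derive (0 : R) (1 : R)
       (fun t : R => J1 A B C M (W + t *: delta_mx i j) V)
       ((2%:R *: (A *m V *m (X^T *m K + Ph *m L)
                  + B *m B^T *m (K + W *m L))) i j)) /\
  (forall (i : 'I_n) (j : 'I_r),
     is_derive (0 : R) (1 : R)
       (fun t : R => J1 A B C M W (V + t *: delta_mx i j))
       ((2%:R *: (A^T *m W *m (K^T *m X + L *m Ph)
                  + C^T *m C *m (V *m Ph - X)
                  + 2%:R *: (M *m V *m (Ph *m (V^T *m M *m V) *m Ph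
                                        - X^T *m M *m X)))) i j)).
Proof.
move=> hurA symM _ hurAh _ eqX eqPh eqK eqL.
have symPh : Ph^T = Ph by apply: lyapunov_sym hurAh _ eqPh; rewrite trmx_mul trmxK.
have symL : L^T = L.
  pose Q := (C *m V)^T *m (C *m V) + 2%:R *: (V^T *m M *m V *m Ph *m (V^T *m M *m V)).
  apply: (@lyapunov_sym _ _ _ _ Q (hurwitz_trmx hurAh)); last by rewrite trmxK addrA.
  by rewrite /Q linearD linearZ /= !trmx_mul !trmxK symM symPh !mulmxA.
by split=> i j; [apply: is_derive_J1_W | apply: is_derive_J1_V].
Qed.
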